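(* Let $\mathcal{D}\subseteq\mathcal{M}^0_+$ be solid and suppose its closure satisfies $\overline{\mathcal{D}}=\mathcal{M}^0_+$. Then for every $\epsilon\in(0,1)$ there exists $\mu\in\mathcal{M}^0_+$ with $\mathbb{P}[\mathrm{d}\mu/\mathrm{d}\mathbb{P}=0]<\epsilon$ such that $a\mu\in\mathcal{D}$ for all $a\in\mathbb{R}_+$.
   Context: $(\Omega,\mathcal{F},\mathbb{P})$ is a probability space. $\mathcal{M}^0_+$ is the convex cone of all $\sigma$-finite nonnegative measures on $(\Omega,\mathcal{F})$ absolutely continuous with respect to $\mathbb{P}$, identified with $\mathbb{L}^0_+$ via $\mu\mapsto\mathrm{d}\mu/\mathrm{d}\mathbb{P}$ and equipped with the topology transported from the topology of convergence in probability on $\mathbb{L}^0_+$ (closure is taken in this topology). $\mathcal{D}\subseteq\mathcal{M}^0_+$ is solid if $\nu\in\mathcal{D}$, $\mu\in\mathcal{M}^0_+$ and $\mu\le\nu$ (i.e. $\mu[A]\le\nu[A]$ for all $A\in\mathcal{F}$) imply $\mu\in\mathcal{D}$. *)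

From HB Require Import structures.
From mathcomp Require Import all_boot all_order all_algebra.
From mathcomp Require Import all_classical all_reals all_analysis.
Set Implicit Arguments. Unset Strict Implicit. Unset Printing Implicit Defensive.
Import Order.TTheory GRing.Theory Num.Theory.
Local Open Scope classical_set_scope.
Local Open Scope ring_scope.

(* L^0_+ : densities dmu/dP of sigma-finite measures mu << P, represented
   by nonnegative real-valued measurable functions (a.e. classes handled
   through the a.e.-ordering below). *)
Definition L0plus d (T : measurableType d) (R : realType) : set (T -> R) :=
  [set f : T -> R | measurable_fun setT f /\ forall x, 0 <= f x].

Arguments L0plus {d} T R.

(* mu <= nu  iff  dmu/dP <= dnu/dP  P-a.e. *)
Definition solid d (T : measurableType d) (R : realType)
  (P : probability T R) (D : set (T -> R)) : Prop :=
  forall f g, D g -> L0plus T R f -> {ae P, forall x, f x <= g x} -> D f.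

Definition cvg_in_prob d (T : measurableType d) (R : realType)
  (P : probability T R) (u : nat -> T -> R) (f : T -> R) : Prop :=
  forall e : R, 0 < e ->
    (fun n => P [set x | e < `| u n x - f x |]) @ \oo --> (0%R : \bar R).

(* closure of D in the (metrizable) topology of convergence in probability *)
Definition prob_closure d (T : measurableType d) (R : realType)
  (P : probability T R) (D : set (T -> R)) : set (T -> R) :=
  [set f : T -> R | L0plus T R f /\
     exists u : nat -> T -> R, (forall n, D (u n)) /\ cvg_in_prob P u f].

From HB Require Import structures.
From mathcomp Require Import all_boot all_order all_algebra.
From mathcomp Require Import all_classical all_reals all_analysis.
Import Order.TTheory GRing.Theory Num.Theory.
From mathcomp Require Import lra.
Set Implicit Arguments. Unset Strict Implicit. Unset Printing Implicit Defensive.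
Local Open Scope classical_set_scope.
Local Open Scope ring_scope.

(* Density of D lets us find, for each n, some g_n in D with g_n >= n off a
   set of probability at most eps 2^-(n+2).  On B, the set where g_n >= n for
   every n, each a 1_B with a <= n lies below g_n, hence in D by solidity; and
   the complement of B, where 1_B vanishes, has probability below eps/2 by the
   union bound. *)

Section measurable_comparison.
Context d (T : measurableType d) (R : realType).
Implicit Types f g : T -> R.

Lemma measurableT_ltr f g : measurable_fun setT f -> measurable_fun setT g ->
  measurable [set x | f x < g x].
Proof.
move=> mf mg.
have := measurable_realfun.measurable_fun_ltr mf mg measurableT (Y := [set true]) I.
by rewrite setTI.
Qed.

Lemma measurableT_ler f g : measurable_fun setT f -> measurable_fun setT g ->
  measurable [set x | f x <= g x].
Proof.
move=> mf mg.
have := measurable_realfun.measurable_fun_ler mf mg measurableT (Y := [set true]) I.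
by rewrite setTI.
Qed.

End measurable_comparison.

Lemma measure_bigcup_le_geometric d (T : measurableType d) (R : realType)
    (mu : {measure set T -> \bar R}) (A : nat -> set T) (eps : R) :
  0 <= eps -> (forall n, measurable (A n)) ->
  (forall n, (mu (A n) <= (eps / (2 ^ n.+1)%:R)%:E)%E) ->
  (mu (\bigcup_n A n) <= eps%:E)%E.
Proof.
move=> eps0 mA muA.
apply: le_trans (epsilon_trick0 xpredT eps0).
have := measure_sigma_subadditive mu mA (bigcupT_measurable _ mA) (@subset_refl _ _).
move/le_trans; apply.
by apply: lee_nneseries => n _ //; exact: measure_ge0.
Qed.

Lemma cvg_in_prob_small_deviation d (T : measurableType d) (R : realType)
    (P : probability T R) (u : nat -> T -> R) (f : T -> R) (e delta : R) :
  cvg_in_prob P u f -> 0 < e -> 0 < delta ->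
  exists k, (P [set x | (e < `|u k x - f x|)%R] < delta%:E)%E.
Proof.
move=> cvg_u e0 delta0.
have [N _ uN] : \forall k \near \oo, (P [set x | (e < `|u k x - f x|)%R] < delta%:E)%E.
  by apply: (cvg_u e e0 [set y | (y < delta%:E)%E]); apply: lt_nbhsl; exact: delta0.
by exists N; apply: uN => /=.
Qed.

Definition diag_superlevel (T : Type) (R : realType) (g : nat -> T -> R) :=
  \bigcap_n [set x | n%:R <= g n x].

Lemma indic_diag_superlevel_eq0 (T : Type) (R : realType) (g : nat -> T -> R) :
  [set x | \1_(diag_superlevel g) x = 0 :> R] = \bigcup_n [set x | g n x < n%:R].
Proof.
rewrite -[LHS]/(\1_(diag_superlevel g) @^-1` [set 0]) preimage_indic.
rewrite ifF ?ifT; last 2 first.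
- exact/mem_set.
- by apply/negbTE/negP => /set_mem /eqP; rewrite oner_eq0.
rewrite setC_bigcap; apply: eq_bigcupr => n _; apply/funext => x /=.
by rewrite ltNge; apply/propext; split=> /negP.
Qed.

Section dense_solid.
Context d (T : measurableType d) (R : realType) (P : probability T R).
Variable D : set (T -> R).
Hypothesis D_L0plus : D `<=` L0plus T R.

Lemma dense_exceeds_level (c delta : R) :
  prob_closure P D = L0plus T R -> 0 <= c -> 0 < delta ->
  exists g, D g /\ (P [set x | (g x < c)%R] < delta%:E)%E.
Proof.
move=> Dclosure c0 delta0.
have : L0plus T R (fun=> c + 1) by split=> // x; lra.
rewrite -Dclosure => -[_ [u [Du cvg_u]]].
have [k Pk] := cvg_in_prob_small_deviation cvg_u ltr01 delta0.
exists (u k); split => //; apply: le_lt_trans Pk.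
have [mu _] := D_L0plus (Du k).
apply: le_measure; rewrite ?inE.
- exact: measurableT_ltr.
- apply: measurableT_ltr => //; apply: measurableT_comp => //.
  exact: measurable_realfun.measurable_funB.
- by move=> x /= ukx; rewrite ler0_norm; lra.
Qed.

Lemma measurable_diag_superlevel (g : nat -> T -> R) :
  (forall n, D (g n)) -> measurable (diag_superlevel g).
Proof.
move=> Dg; apply: bigcapT_measurable => n.
by apply: measurableT_ler => //; have [] := D_L0plus (Dg n).
Qed.

Lemma solid_scaled_indic_diag_superlevel (g : nat -> T -> R) (a : R) :
  solid P D -> (forall n, D (g n)) -> 0 <= a ->
  D (fun x => a * \1_(diag_superlevel g) x).
Proof.
move=> Dsolid Dg a0; set B := diag_superlevel g.
have mB : measurable B := measurable_diag_superlevel Dg.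
pose n := (Num.truncn a).+1.
apply: (Dsolid _ (g n) (Dg n)).
  split; last by move=> x; rewrite indicE mulr_ge0.
  by apply: measurable_realfun.measurable_funM => //; exact: measurable_realfun.measurable_indic.
apply: aeW => x /=; rewrite indicE; have [/set_mem Bx|_] := boolP (x \in B).
  by rewrite mulr1 (le_trans (ltW (truncnS_gt a))) //; exact: Bx.
by rewrite mulr0; have [] := D_L0plus (Dg n).
Qed.

End dense_solid.

Theorem lemmaA1 (d : measure_display) (T : measurableType d) (R : realType)
  (P : probability T R) (D : set (T -> R)) :
  D `<=` L0plus T R ->
  solid P D ->
  prob_closure P D = L0plus T R ->
  forall eps : R, 0 < eps < 1 ->
  exists mu : T -> R, L0plus T R mu /\
    (P [set x | mu x = 0%R] < eps%:E)%E /\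
    (forall a : R, 0 <= a -> D (fun x => (a * mu x)%R)).
Proof.
move=> D_L0plus Dsolid Dclosure eps /andP[eps0 _].
have level n : exists g, D g /\
    (P [set x | (g x < n%:R)%R] < ((eps / 2) / (2 ^ n.+1)%:R)%:E)%E.
  apply: dense_exceeds_level => //.
  by rewrite !divr_gt0 // ltr0n expn_gt0.
have [g gP] := choice level.
have Dg n := (gP n).1.
have mB := measurable_diag_superlevel D_L0plus Dg.
exists \1_(diag_superlevel g); split; [|split].
- by split=> [|x]; [exact: measurable_realfun.measurable_indic | rewrite indicE ler0n].
- rewrite indic_diag_superlevel_eq0.
  apply: (@le_lt_trans _ _ (eps / 2)%:E); last by rewrite lte_fin; lra.
  apply: measure_bigcup_le_geometric => [|n|n]; first by rewrite divr_ge0 ?ltW.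
  + by apply: measurableT_ltr => //; have [] := D_L0plus _ (Dg n).
  + exact: ltW (gP n).2.
- move=> a a0; apply: solid_scaled_indic_diag_superlevel.
  + exact: D_L0plus.
  + exact: Dsolid.
  + exact: Dg.
  + exact: a0.
Qed.
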